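(* Let $r\ge 1$ be an integer, let $A$ be a finite alphabet, and let $f_0,\ldots,f_{r-1}$ be morphisms of $A^*$. If an infinite word $\mathbf{w}$ over $A$ is an alternating fixed point of $(f_0,\ldots,f_{r-1})$, then $\mathbf{w}$ is a fixed point of some $r$-block substitution $g:A^r\to A^*$.
   Context: An infinite word $\mathbf{w}=w_0w_1w_2\cdots$ over $A$ is an alternating fixed point of $(f_0,\ldots,f_{r-1})$ if $\mathbf{w}=f_0(w_0)f_1(w_1)\cdots f_{r-1}(w_{r-1})f_0(w_r)\cdots f_{i\bmod r}(w_i)\cdots$. An $r$-block substitution is a map $g:A^r\to A^*$; it acts on a word $w_0\cdots w_{rn-1}$ by $g(w_0\cdots w_{r-1})g(w_r\cdots w_{2r-1})\cdots g(w_{r(n-1)}\cdots w_{rn-1})$ (a suffix of length less than $r$ is ignored). An infinite word $\mathbf{w}=w_0w_1\cdots$ is a fixed point of $g$ if $\mathbf{w}=g(w_0\cdots w_{r-1})g(w_r\cdots w_{2r-1})\cdots$. *)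

From mathcomp Require Import all_boot.
Set Implicit Arguments. Unset Strict Implicit. Unset Printing Implicit Defensive.

Definition infword (A : Type) := nat -> A.

(* A morphism of A^* is given by the images of the letters: f : A -> seq A,
   acting on words by concatenation. *)
Definition morphism (A : Type) := A -> seq A.

(* w equals the infinite concatenation u 0 ++ u 1 ++ u 2 ++ ... :
   every finite partial concatenation is a prefix of w, and the lengths of
   the partial concatenations are unbounded (so the concatenation is infinite). *)
Definition is_concat (A : Type) (w : infword A) (u : nat -> seq A) : Prop :=
  (forall n i, i < size (flatten (mkseq u n)) ->
     nth (w 0) (flatten (mkseq u n)) i = w i) /\
  (forall N, exists n, N <= size (flatten (mkseq u n))).

Definition alternating_fixed_point (A : Type) (r : nat) (f : nat -> morphism A)
    (w : infword A) : Prop :=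
  is_concat w (fun i => f (i %% r) (w i)).

Definition block (A : Type) (r : nat) (w : infword A) (n : nat) : r.-tuple A :=
  [tuple w (r * n + i) | i < r].

Definition block_fixed_point (A : Type) (r : nat) (g : r.-tuple A -> seq A)
    (w : infword A) : Prop :=
  is_concat w (fun n => g (block r w n)).

From mathcomp Require Import all_boot.

Set Implicit Arguments.
Unset Strict Implicit.
Unset Printing Implicit Defensive.

(* With g(a_0 ... a_{r-1}) = f_0(a_0) ... f_{r-1}(a_{r-1}), the image of the
   k-th block of w is the concatenation of the factors f_{i mod r}(w_i) for
   r k <= i < r (k + 1), because (r k + i) mod r = i.  Grouping the factors of
   the alternating fixed point r at a time therefore gives the block fixed
   point. *)

Lemma mkseqD (T : Type) (u : nat -> T) a b :
  mkseq u (a + b) = mkseq u a ++ mkseq (fun i => u (a + i)) b.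
Proof.
rewrite /mkseq iotaD map_cat; congr (_ ++ _).
by rewrite -[a in iota a]addn0 iotaDl -map_comp.
Qed.

Lemma size_flatten_mkseq_mono (T : Type) (u : nat -> seq T) a b :
  a <= b -> size (flatten (mkseq u a)) <= size (flatten (mkseq u b)).
Proof. by move=> /subnKC <-; rewrite mkseqD flatten_cat size_cat leq_addr. Qed.

Lemma flatten_mkseq_blocks (T : Type) (u : nat -> seq T) r n :
  flatten (mkseq (fun k => flatten (mkseq (fun i => u (r * k + i)) r)) n)
  = flatten (mkseq u (r * n)).
Proof.
elim: n => [|n IHn]; first by rewrite muln0.
by rewrite -addn1 mulnDr muln1 !mkseqD !flatten_cat IHn /= addn0 cats0.
Qed.

Lemma is_concat_regroup (A : Type) (w : infword A) (u v : nat -> seq A) r :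
  0 < r -> (forall n, flatten (mkseq v n) = flatten (mkseq u (r * n))) ->
  is_concat w u -> is_concat w v.
Proof.
move=> r_gt0 vu [prefix_u unbounded_u]; split=> [n i|N].
  by rewrite vu; apply: prefix_u.
have [n le_N_n] := unbounded_u N; exists n; rewrite vu.
by apply: (leq_trans le_N_n); apply: size_flatten_mkseq_mono; rewrite leq_pmull.
Qed.

Definition alternating_block_subst (A : Type) (r : nat) (f : nat -> morphism A)
    (t : r.-tuple A) : seq A :=
  flatten [seq f i (tnth t i) | i : 'I_r].

Lemma alternating_block_subst_block (A : Type) (r : nat) (f : nat -> morphism A)
    (w : infword A) (k : nat) :
  alternating_block_subst f (block r w k)
  = flatten (mkseq (fun i => f ((r * k + i) %% r) (w (r * k + i))) r).
Proof.
rewrite /alternating_block_subst /mkseq -val_enum_ord -map_comp; congr flatten.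
apply/eq_map => i /=.
by rewrite tnth_mktuple mulnC modnMDl modn_small.
Qed.

Theorem mainTheorem1 (A : finType) (r : nat) (f : nat -> morphism A)
    (w : infword A) :
  1 <= r -> alternating_fixed_point r f w ->
  exists g : r.-tuple A -> seq A, block_fixed_point g w.
Proof.
move=> r_gt0 alt_w; exists (alternating_block_subst f).
apply: (is_concat_regroup r_gt0 _ alt_w) => n.
rewrite -(flatten_mkseq_blocks (fun i => f (i %% r) (w i))).
by congr flatten; apply: eq_mkseq => k; apply: alternating_block_subst_block.
Qed.
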